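(* Let $\mathcal{L} \subseteq \mathcal{P}(\mathbb{N})$ be a class of languages. The following are equivalent: (i) every $L\in\mathcal L$ is finite; (ii) $\mathcal{L} \in [\tau(\mathbf{Caut}_{\mathbf{Tar}})\mathbf{Txt}\mathbf{Sd}\mathbf{Ex}]$; (iii) $\mathcal{L} \in [\tau(\mathbf{Caut}_{\mathbf{Tar}})\mathbf{Txt}\mathbf{G}\mathbf{Bc}]$.
   Context: Fix an acceptable numbering $(\varphi_e)$ of partial computable functions, $W_e=\mathrm{dom}(\varphi_e)$. A text is a total function $T:\mathbb N\to\mathbb N\cup\{\#\}$, $\mathrm{content}(T)=\mathrm{range}(T)\setminus\{\#\}$, $T[n]=(T(0),\dots,T(n-1))$; $\mathbf{Txt}$ is the set of all texts, $\mathbf{Txt}(L)$ those with content $L$. Learners are partial computable functions. $\mathbf G(h,T)(i)=h(T[i])$, $\mathbf{Sd}(h,T)(i)=h(\mathrm{content}(T[i]))$. For total $p:\mathbb N\to\mathbb N$ and text $T$: $\mathbf{Ex}(p,T)$ iff $\exists n_0\,\forall n\ge n_0: p(n)=p(n_0)\wedge W_{p(n_0)}=\mathrm{content}(T)$; $\mathbf{Bc}(p,T)$ iff $\exists n_0\,\forall n\ge n_0: W_{p(n)}=\mathrm{content}(T)$; $\mathbf{Caut}_{\mathbf{Tar}}(p,T)$ iff for all $n$ it is not the case that $\mathrm{content}(T)\subsetneq W_{p(n)}$. A learner $h$ $\tau(\alpha)\mathbf{Txt}\beta\delta$-learns $L$ iff for every text $T\in\mathbf{Txt}$, $\beta(h,T)$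 is total and $\alpha(\beta(h,T),T)$ holds, and for every $T\in\mathbf{Txt}(L)$, $\delta(\beta(h,T),T)$ holds. $[\tau(\alpha)\mathbf{Txt}\beta\delta]$ is the set of all classes $\mathcal L$ such that some learner $\tau(\alpha)\mathbf{Txt}\beta\delta$-learns every $L\in\mathcal L$. *)

From Stdlib Require Import Arith List.
Import ListNotations.

Inductive code : Type :=
| CZero : code
| CSucc : code
| CProj : nat -> code
| CComp : code -> list code -> code
| CPrec : code -> code -> code
| CMu   : code -> code.

Inductive eval : code -> list nat -> nat -> Prop :=
| eZero args : eval CZero args 0
| eSucc args : eval CSucc args (S (hd 0 args))
| eProj i args : eval (CProj i) args (nth i args 0)
| eComp f gs args ys y :
    evals gs args ys -> eval f ys y -> eval (CComp f gs) args y
| ePrec0 f g args y :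
    eval f args y -> eval (CPrec f g) (0 :: args) y
| ePrecS f g n args r y :
    eval (CPrec f g) (n :: args) r -> eval g (n :: r :: args) y ->
    eval (CPrec f g) (S n :: args) y
| eMu f args n :
    eval f (n :: args) 0 ->
    (forall m, m < n -> exists k, eval f (m :: args) (S k)) ->
    eval (CMu f) args n
with evals : list code -> list nat -> list nat -> Prop :=
| esNil args : evals [] args []
| esCons g gs args y ys :
    eval g args y -> evals gs args ys -> evals (g :: gs) args (y :: ys).

Definition cpair (a b : nat) : nat := (a + b) * S (a + b) / 2 + b.

Fixpoint encode (c : code) : nat :=
  match c with
  | CZero => cpair 0 0
  | CSucc => cpair 1 0
  | CProj i => cpair 2 i
  | CComp f gs =>
      cpair 3 (cpair (encode f)
                 ((fix encl (l : list code) : nat :=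
                     match l with
                     | [] => 0
                     | g :: l' => S (cpair (encode g) (encl l'))
                     end) gs))
  | CPrec f g => cpair 4 (cpair (encode f) (encode g))
  | CMu f => cpair 5 (encode f)
  end.

(* Standard Goedel numbering of the unary partial computable functions:
   phi e x = y.  Numbers that encode no program denote the empty function. *)
Definition phi (e x y : nat) : Prop :=
  exists c, encode c = e /\ eval c [x] y.

Definition total_computable (f : nat -> nat) : Prop :=
  exists c, forall x, eval c [x] (f x).

(* A numbering psi (psi e x y : "psi_e(x) = y") is acceptable iff there are
   computable translations in both directions with the standard numbering. *)
Definition acceptable (psi : nat -> nat -> nat -> Prop) : Prop :=
  (exists t, total_computable t /\ forall e x y, psi e x y <-> phi (t e) x y) /\
  (exists s, total_computable s /\ forall e x y, phi e x y <-> psi (s e) x y).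

Definition W (psi : nat -> nat -> nat -> Prop) (e : nat) : nat -> Prop :=
  fun x => exists y, psi e x y.

(* None plays the role of the pause symbol # *)
Definition text := nat -> option nat.

Definition content (T : text) : nat -> Prop := fun x => exists n, T n = Some x.

Definition prefix (T : text) (n : nat) : list (option nat) := map T (seq 0 n).

Definition enc_opt (a : option nat) : nat :=
  match a with None => 0 | Some x => S x end.
Fixpoint code_seq (l : list (option nat)) : nat :=
  match l with
  | [] => 0
  | a :: l' => S (cpair (enc_opt a) (code_seq l'))
  end.

Fixpoint somes (l : list (option nat)) : list nat :=
  match l with
  | [] => []
  | None :: l' => somes l'
  | Some x :: l' => x :: somes l'
  end.
Definition canon_index (l : list (option nat)) : nat :=
  fold_right (fun x acc => 2 ^ x + acc) 0 (nodup Nat.eq_dec (somes l)).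

(* A learner is a partial computable function, given by a program h.
   beta h T p : the (total) learning sequence of h on T is p. *)
Definition interaction := code -> text -> (nat -> nat) -> Prop.

Definition G_op : interaction :=
  fun h T p => forall i, eval h [code_seq (prefix T i)] (p i).

Definition Sd_op : interaction :=
  fun h T p => forall i, eval h [canon_index (prefix T i)] (p i).

Definition criterion := (nat -> nat) -> text -> Prop.

Definition set_eq (A B : nat -> Prop) : Prop := forall x, A x <-> B x.
Definition subset (A B : nat -> Prop) : Prop := forall x, A x -> B x.

Definition Ex_crit (psi : nat -> nat -> nat -> Prop) : criterion :=
  fun p T => exists n0, forall n, n0 <= n ->
    p n = p n0 /\ set_eq (W psi (p n0)) (content T).

Definition Bc_crit (psi : nat -> nat -> nat -> Prop) : criterion :=
  fun p T => exists n0, forall n, n0 <= n -> set_eq (W psi (p n)) (content T).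

Definition CautTar (psi : nat -> nat -> nat -> Prop) : criterion :=
  fun p T => forall n,
    ~ (subset (content T) (W psi (p n)) /\ ~ subset (W psi (p n)) (content T)).

Definition learns (alpha : criterion) (beta : interaction) (delta : criterion)
  (h : code) (L : nat -> Prop) : Prop :=
  (forall T : text, exists p, beta h T p /\ alpha p T) /\
  (forall T : text, set_eq (content T) L -> exists p, beta h T p /\ delta p T).

Definition learnable (alpha : criterion) (beta : interaction) (delta : criterion)
  (Lcal : (nat -> Prop) -> Prop) : Prop :=
  exists h : code, forall L, Lcal L -> learns alpha beta delta h L.

Definition finite_lang (L : nat -> Prop) : Prop :=
  exists s : list nat, forall x, L x <-> In x s.

(* A learner that conjectures the content of the data seen so far never
   conjectures a proper superset of the target, so it is target-cautious on
   every text; on a finite language this conjecture is eventually correct, and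
   when it is computed from the canonical index of that finite set it is even
   eventually constant.  Conversely, if a target-cautious learner has
   identified L after a prefix s of a text for L, it makes the same conjecture
   on s followed only by pauses, and cautiousness on that text forces
   L to be contained in content(s).

   The learner is a mu-recursive program: on input k it outputs the code of an
   unbounded search for a position of k that exhibits x (a set bit of a
   canonical index, resp. an entry of a coded sequence), whose domain is the
   content coded by k, translated into the numbering psi. *)

From Stdlib Require Import Arith Bool Lia List Wf_nat Classical ClassicalEpsilon.
Import ListNotations.

(** * Determinism of evaluation and injectivity of the numbering *)

Fixpoint eval_functional c args y (H : eval c args y) {struct H} :
  forall y', eval c args y' -> y = y'
with evals_functional cs args ys (H : evals cs args ys) {struct H} :
  forall ys', evals cs args ys' -> ys = ys'.
Proof.
  - destruct H as [| | |f gs args ys y Hgs Hf|f g args y Hf|f g n args r y Hr Hg|f args n Hz Hlt];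
      intros y' H';
      inversion H' as [| | |? ? ? ys' ? Hgs' Hf'|? ? ? ? Hf'|? ? ? ? r' ? Hr' Hg'|? ? ? Hz' Hlt'];
      subst; try reflexivity.
    + pose proof (evals_functional _ _ _ Hgs _ Hgs'); subst. exact (eval_functional _ _ _ Hf _ Hf').
    + exact (eval_functional _ _ _ Hf _ Hf').
    + pose proof (eval_functional _ _ _ Hr _ Hr'); subst. exact (eval_functional _ _ _ Hg _ Hg').
    + destruct (lt_eq_lt_dec n y') as [[Hl|Hl]|Hl]; [| exact Hl |].
      * destruct (Hlt' n Hl) as [k Hk]. discriminate (eval_functional _ _ _ Hz _ Hk).
      * destruct (Hlt y' Hl) as [k Hk]. discriminate (eval_functional _ _ _ Hk _ Hz').
  - destruct H as [|g gs args y ys Hg Hgs]; intros ys' H';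
      inversion H' as [|? ? ? y' ys'' Hg' Hgs']; subst; [reflexivity|].
    f_equal; [exact (eval_functional _ _ _ Hg _ Hg') | exact (evals_functional _ _ _ Hgs _ Hgs')].
Qed.

Fixpoint triangle n := match n with 0 => 0 | S m => triangle m + S m end.

Lemma cpair_triangle a b : cpair a b = triangle (a + b) + b.
Proof.
  assert (Hdouble : forall n, triangle n * 2 = n * S n) by (induction n; simpl; lia).
  unfold cpair. rewrite <- Hdouble, Nat.div_mul by lia. reflexivity.
Qed.

Lemma triangle_le m m' : m <= m' -> triangle m <= triangle m'.
Proof. induction 1; simpl; lia. Qed.

Lemma triangle_gap m m' : m < m' -> triangle m + m < triangle m'.
Proof. intros H. pose proof (triangle_le (S m) m' H). simpl in *. lia. Qed.

Lemma cpair_inj a b a' b' : cpair a b = cpair a' b' -> a = a' /\ b = b'.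
Proof.
  rewrite !cpair_triangle. intros E.
  destruct (lt_eq_lt_dec (a + b) (a' + b')) as [[H|H]|H].
  - pose proof (triangle_gap _ _ H). lia.
  - rewrite H in E. lia.
  - pose proof (triangle_gap _ _ H). lia.
Qed.

Section CodeInd.
Variable P : code -> Prop.
Hypothesis HZero : P CZero.
Hypothesis HSucc : P CSucc.
Hypothesis HProj : forall i, P (CProj i).
Hypothesis HComp : forall f gs, P f -> Forall P gs -> P (CComp f gs).
Hypothesis HPrec : forall f g, P f -> P g -> P (CPrec f g).
Hypothesis HMu : forall f, P f -> P (CMu f).

Fixpoint code_nested_ind c : P c :=
  match c with
  | CZero => HZero
  | CSucc => HSucc
  | CProj i => HProj i
  | CComp f gs => HComp f gs (code_nested_ind f)
      ((fix go l : Forall P l :=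
          match l with
          | [] => Forall_nil _
          | g :: l' => Forall_cons _ (code_nested_ind g) (go l')
          end) gs)
  | CPrec f g => HPrec f g (code_nested_ind f) (code_nested_ind g)
  | CMu f => HMu f (code_nested_ind f)
  end.
End CodeInd.

Fixpoint encode_list (l : list code) : nat :=
  match l with [] => 0 | g :: l' => S (cpair (encode g) (encode_list l')) end.

Lemma encode_unfold c : encode c =
  match c with
  | CZero => cpair 0 0
  | CSucc => cpair 1 0
  | CProj i => cpair 2 i
  | CComp f gs => cpair 3 (cpair (encode f) (encode_list gs))
  | CPrec f g => cpair 4 (cpair (encode f) (encode g))
  | CMu f => cpair 5 (encode f)
  end.
Proof. destruct c; reflexivity. Qed.

Lemma encode_inj c1 c2 : encode c1 = encode c2 -> c1 = c2.
Proof.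
  revert c2.
  induction c1 as [| |i|f gs IHf IHgs|f g IHf IHg|f IHf] using code_nested_ind;
    intros c2 E; rewrite (encode_unfold c2), encode_unfold in E;
    destruct c2; apply cpair_inj in E as [Etag E]; try discriminate; try reflexivity.
  - now subst.
  - apply cpair_inj in E as [Ef Egs]. f_equal; [now apply IHf|].
    clear IHf Ef. revert l Egs.
    induction IHgs as [|g gs IHg _ IH]; intros [|g' gs'] E; try discriminate; [reflexivity|].
    injection E as E. apply cpair_inj in E as [Eg Egs]. f_equal; auto.
  - apply cpair_inj in E as [Ef Eg]. f_equal; auto.
  - f_equal; auto.
Qed.

Definition comp1 f g := CComp f [g].
Definition comp2 f g h := CComp f [g; h].
Definition comp3 f g h i := CComp f [g; h; i].

Lemma eval_comp1 f g args y z : eval g args y -> eval f [y] z -> eval (comp1 f g) args z.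
Proof. intros; econstructor; eauto using evals. Qed.
Lemma eval_comp2 f g h args y1 y2 z :
  eval g args y1 -> eval h args y2 -> eval f [y1; y2] z -> eval (comp2 f g h) args z.
Proof. intros; econstructor; eauto using evals. Qed.
Lemma eval_comp3 f g h i args y1 y2 y3 z :
  eval g args y1 -> eval h args y2 -> eval i args y3 -> eval f [y1; y2; y3] z ->
  eval (comp3 f g h i) args z.
Proof. intros; econstructor; eauto using evals. Qed.

Fixpoint const n := match n with 0 => CZero | S m => comp1 CSucc (const m) end.

Lemma eval_const n args : eval (const n) args n.
Proof. induction n; simpl; eauto using eval, eval_comp1. Qed.

Create HintDb mu.
#[local] Hint Resolve eval_comp1 eval_comp2 eval_comp3 eval_const eZero eSucc eProj : mu.

Fixpoint primrec (c0 : nat) (G : nat -> nat -> nat) n :=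
  match n with 0 => c0 | S m => G m (primrec c0 G m) end.

Lemma eval_prec f g args c0 G : eval f args c0 ->
  (forall n r, eval g (n :: r :: args) (G n r)) ->
  forall n, eval (CPrec f g) (n :: args) (primrec c0 G n).
Proof. intros Hf Hg n. induction n; simpl; econstructor; eauto. Qed.

Definition cpred := CPrec CZero (CProj 0).
Lemma eval_pred n : eval cpred [n] (pred n).
Proof.
  replace (pred n) with (primrec 0 (fun m _ => m) n) by (destruct n; reflexivity).
  apply eval_prec; eauto with mu.
Qed.
#[local] Hint Resolve eval_pred : mu.

Definition cadd := CPrec (CProj 0) (comp1 CSucc (CProj 1)).
Lemma eval_add a b : eval cadd [a; b] (a + b).
Proof.
  replace (a + b) with (primrec b (fun _ r => S r) a) by (induction a; simpl; auto).
  apply eval_prec; eauto with mu.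
Qed.
#[local] Hint Resolve eval_add : mu.

Definition csub := comp2 (CPrec (CProj 0) (comp1 cpred (CProj 1))) (CProj 1) (CProj 0).
Lemma eval_sub a b : eval csub [a; b] (a - b).
Proof.
  replace (a - b) with (primrec a (fun _ r => pred r) b) by (induction b; simpl; lia).
  eapply eval_comp2; eauto with mu. apply eval_prec; eauto with mu.
Qed.
#[local] Hint Resolve eval_sub : mu.

Definition iszero n := match n with 0 => 1 | S _ => 0 end.
Definition ciszero := CPrec (const 1) CZero.
Lemma eval_iszero n : eval ciszero [n] (iszero n).
Proof.
  replace (iszero n) with (primrec 1 (fun _ _ => 0) n) by (destruct n; reflexivity).
  apply eval_prec; eauto with mu.
Qed.
#[local] Hint Resolve eval_iszero : mu.

Definition dist a b := a - b + (b - a).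
Definition cdist := comp2 cadd csub (comp2 csub (CProj 1) (CProj 0)).
Lemma eval_dist a b : eval cdist [a; b] (dist a b).
Proof. unfold cdist, dist. eauto 7 with mu. Qed.
#[local] Hint Resolve eval_dist : mu.

Definition ctriangle := CPrec CZero (comp2 cadd (CProj 1) (comp1 CSucc (CProj 0))).
Lemma eval_triangle n : eval ctriangle [n] (triangle n).
Proof.
  replace (triangle n) with (primrec 0 (fun m r => r + S m) n) by (induction n; simpl; auto).
  apply eval_prec; eauto with mu.
Qed.
#[local] Hint Resolve eval_triangle : mu.

Definition ccpair := comp2 cadd (comp1 ctriangle cadd) (CProj 1).
Lemma eval_cpair a b : eval ccpair [a; b] (cpair a b).
Proof. rewrite cpair_triangle. unfold ccpair. eauto with mu. Qed.
#[local] Hint Resolve eval_cpair : mu.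

Definition cparity := CPrec CZero (comp1 ciszero (CProj 1)).
Lemma eval_parity n : eval cparity [n] (n mod 2).
Proof.
  replace (n mod 2) with (primrec 0 (fun _ r => iszero r) n).
  - apply eval_prec; eauto with mu.
  - induction n as [|n IH]; [reflexivity|]. cbn [primrec]. rewrite IH.
    pose proof (Nat.div_mod n 2). pose proof (Nat.div_mod (S n) 2).
    pose proof (Nat.mod_upper_bound n 2). pose proof (Nat.mod_upper_bound (S n) 2).
    destruct (n mod 2) as [|[|]] eqn:E; cbn [iszero]; lia.
Qed.
#[local] Hint Resolve eval_parity : mu.

Definition chalf := CPrec CZero (comp2 cadd (CProj 1) (comp1 cparity (CProj 0))).
Lemma eval_half n : eval chalf [n] (n / 2).
Proof.
  replace (n / 2) with (primrec 0 (fun m r => r + m mod 2) n).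
  - apply eval_prec; eauto with mu.
  - induction n as [|n IH]; [reflexivity|]. cbn [primrec]. rewrite IH.
    pose proof (Nat.div_mod n 2). pose proof (Nat.div_mod (S n) 2).
    pose proof (Nat.mod_upper_bound n 2). pose proof (Nat.mod_upper_bound (S n) 2). lia.
Qed.
#[local] Hint Resolve eval_half : mu.

Definition cshiftr := CPrec (CProj 0) (comp1 chalf (CProj 1)).
Lemma eval_shiftr x k : eval cshiftr [x; k] (k / 2 ^ x).
Proof.
  replace (k / 2 ^ x) with (primrec k (fun _ r => r / 2) x).
  - apply eval_prec; eauto with mu.
  - induction x as [|x IH]; cbn [primrec]; [now rewrite Nat.div_1_r|].
    rewrite IH, Nat.Div0.div_div, Nat.pow_succ_r'. f_equal. lia.
Qed.
#[local] Hint Resolve eval_shiftr : mu.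

(** * Decoding pairs, coded sequences and canonical indices *)

Definition cantor_diag := primrec 0 (fun n d => d + iszero (triangle (S d) - S n)).
Definition ccantor_diag := CPrec CZero (comp2 cadd (CProj 1)
  (comp1 ciszero (comp2 csub (comp1 ctriangle (comp1 CSucc (CProj 1))) (comp1 CSucc (CProj 0))))).
Lemma eval_cantor_diag k : eval ccantor_diag [k] (cantor_diag k).
Proof. apply eval_prec; eauto 8 with mu. Qed.
#[local] Hint Resolve eval_cantor_diag : mu.

Lemma cantor_diag_spec k :
  triangle (cantor_diag k) <= k < triangle (S (cantor_diag k)).
Proof.
  induction k as [|k IH]; [simpl; lia|].
  unfold cantor_diag; cbn [primrec]; fold cantor_diag.
  destruct (triangle (S (cantor_diag k)) - S k) eqn:E; cbn [iszero];
    rewrite ?Nat.add_1_r, ?Nat.add_0_r; cbn [triangle] in *; lia.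
Qed.

Lemma cantor_diag_unique k m : triangle m <= k < triangle (S m) -> cantor_diag k = m.
Proof.
  intros H. pose proof (cantor_diag_spec k).
  destruct (lt_eq_lt_dec (cantor_diag k) m) as [[Hl|Hl]|Hl]; auto.
  - pose proof (triangle_le _ _ Hl). lia.
  - pose proof (triangle_le _ _ Hl). lia.
Qed.

Definition unpair2 k := k - triangle (cantor_diag k).
Definition unpair1 k := cantor_diag k - unpair2 k.

Lemma unpair_cpair a b : unpair1 (cpair a b) = a /\ unpair2 (cpair a b) = b.
Proof.
  rewrite cpair_triangle.
  assert (Hd : cantor_diag (triangle (a + b) + b) = a + b)
    by (apply cantor_diag_unique; cbn [triangle]; lia).
  unfold unpair1, unpair2. rewrite Hd. lia.
Qed.

Definition cunpair2 := comp2 csub (CProj 0) (comp1 ctriangle ccantor_diag).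
Lemma eval_unpair2 k : eval cunpair2 [k] (unpair2 k).
Proof. unfold cunpair2, unpair2. eauto with mu. Qed.
#[local] Hint Resolve eval_unpair2 : mu.

Definition cunpair1 := comp2 csub ccantor_diag cunpair2.
Lemma eval_unpair1 k : eval cunpair1 [k] (unpair1 k).
Proof. unfold cunpair1, unpair1. eauto with mu. Qed.
#[local] Hint Resolve eval_unpair1 : mu.

Definition seq_head k := unpair1 (pred k).
Definition seq_drop i k := primrec k (fun _ r => unpair2 (pred r)) i.

Lemma seq_head_code a l : seq_head (code_seq (a :: l)) = enc_opt a.
Proof. apply unpair_cpair. Qed.

Lemma seq_drop_code i l : seq_drop i (code_seq l) = code_seq (skipn i l).
Proof.
  induction i as [|i IH]; [reflexivity|].
  unfold seq_drop; cbn [primrec]; fold (seq_drop i (code_seq l)).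
  rewrite IH, <- (skipn_skipn 1 i).
  destruct (skipn i l) as [|a m]; [reflexivity|]. apply unpair_cpair.
Qed.

Definition chead := comp1 cunpair1 cpred.
Definition cdrop := CPrec (CProj 0) (comp1 (comp1 cunpair2 cpred) (CProj 1)).
(* [seq_head 0 = 0] differs from every [enc_opt (Some x)], so the end of the
   sequence needs no separate test. *)
Definition centry := comp2 cdist (comp1 chead (comp2 cdrop (CProj 0) (CProj 2))) (comp1 CSucc (CProj 1)).

Lemma eval_entry i x k : eval centry [i; x; k] (dist (seq_head (seq_drop i k)) (S x)).
Proof.
  assert (Hdrop : eval cdrop [i; k] (seq_drop i k)) by (apply eval_prec; eauto with mu).
  unfold centry, chead, seq_head. eauto 7 with mu.
Qed.

Lemma entry_spec i x l :
  dist (seq_head (seq_drop i (code_seq l))) (S x) = 0 <-> nth_error l i = Some (Some x).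
Proof.
  rewrite seq_drop_code, <- hd_error_skipn.
  destruct (skipn i l) as [|[y|] m]; [| rewrite seq_head_code | rewrite seq_head_code];
    cbn; unfold dist; split; intros H; try discriminate; try lia.
  - f_equal. f_equal. lia.
  - injection H as ->. lia.
Qed.

Definition cbit := comp1 ciszero (comp1 cparity (comp2 cshiftr (CProj 1) (CProj 2))).

Lemma eval_bit i x k : eval cbit [i; x; k] (iszero ((k / 2 ^ x) mod 2)).
Proof. unfold cbit. eauto with mu. Qed.

Lemma bit_spec x k : iszero ((k / 2 ^ x) mod 2) = 0 <-> Nat.testbit k x = true.
Proof.
  rewrite <- Nat.testbit_spec'. destruct (Nat.testbit k x); cbn; split; congruence.
Qed.

(** * Unbounded search and the learner *)

Definition search (chk : code) (k : nat) : code :=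
  CMu (comp3 chk (CProj 0) (CProj 1) (const k)).

Lemma search_domain chk k x (F : nat -> nat) :
  (forall i, eval chk [i; x; k] (F i)) ->
  (exists y, eval (search chk k) [x] y) <-> exists i, F i = 0.
Proof.
  intros HF.
  assert (Hbody : forall i, eval (comp3 chk (CProj 0) (CProj 1) (const k)) [i; x] (F i))
    by eauto with mu.
  split.
  - intros [y Hy]. inversion Hy as [| | | | | |? ? ? Hz _]; subst.
    exists y. symmetry. exact (eval_functional _ _ _ Hz _ (Hbody y)).
  - intros Hex.
    destruct (dec_inh_nat_subset_has_unique_least_element (fun i => F i = 0))
      as [m [[Hm Hleast] _]]; [intros; lia | exact Hex |].
    exists m. constructor; [pose proof (Hbody m) as Hzero; rewrite Hm in Hzero; exact Hzero|].
    intros j Hj. destruct (F j) as [|v] eqn:E.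
    + specialize (Hleast j E). lia.
    + exists v. rewrite <- E. apply Hbody.
Qed.

Definition cencode_const := CPrec (const (encode CZero))
  (comp2 ccpair (const 3) (comp2 ccpair (const (encode CSucc))
     (comp1 CSucc (comp2 ccpair (CProj 1) (const 0))))).

Lemma eval_encode_const n : eval cencode_const [n] (encode (const n)).
Proof.
  replace (encode (const n)) with
    (primrec (encode CZero) (fun _ r => cpair 3 (cpair (encode CSucc) (S (cpair r 0)))) n)
    by (induction n as [|n IH]; cbn [primrec]; [|rewrite IH]; reflexivity).
  apply eval_prec; eauto 10 with mu.
Qed.
#[local] Hint Resolve eval_encode_const : mu.

Definition cencode_search (chk : code) : code :=
  comp2 ccpair (const 5) (comp2 ccpair (const 3) (comp2 ccpair (const (encode chk))
    (comp1 CSucc (comp2 ccpair (const (encode (CProj 0)))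
      (comp1 CSucc (comp2 ccpair (const (encode (CProj 1)))
        (comp1 CSucc (comp2 ccpair cencode_const (const 0))))))))).

Lemma eval_encode_search chk k : eval (cencode_search chk) [k] (encode (search chk k)).
Proof.
  change (encode (search chk k)) with
    (cpair 5 (cpair 3 (cpair (encode chk) (S (cpair (encode (CProj 0))
      (S (cpair (encode (CProj 1)) (S (cpair (encode (const k)) 0))))))))).
  unfold cencode_search. eauto 30 with mu.
Qed.

Lemma W_translate psi (s : nat -> nat) (Hs : forall e x y, phi e x y <-> psi (s e) x y) c x :
  W psi (s (encode c)) x <-> exists y, eval c [x] y.
Proof.
  unfold W. split.
  - intros [y Hy]. apply Hs in Hy as [c' [E Hc]]. apply encode_inj in E. subst. eauto.
  - intros [y Hy]. exists y. apply Hs. exists c. auto.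
Qed.

Definition learner (sc chk : code) : code := comp1 sc (cencode_search chk).

Lemma eval_learner sc (s : nat -> nat) chk k :
  (forall x, eval sc [x] (s x)) -> eval (learner sc chk) [k] (s (encode (search chk k))).
Proof. intros Hsc. eapply eval_comp1; [apply eval_encode_search | apply Hsc]. Qed.

Definition content_upto (T : text) (n x : nat) : Prop := exists j, j < n /\ T j = Some x.

Lemma In_prefix T n x : In (Some x) (prefix T n) <-> content_upto T n x.
Proof.
  unfold prefix, content_upto. rewrite in_map_iff. split.
  - intros [j [E H]]. apply in_seq in H. exists j. split; [lia | exact E].
  - intros [j [H E]]. exists j. split; [exact E | apply in_seq; lia].
Qed.

Lemma In_somes x l : In x (somes l) <-> In (Some x) l.
Proof.
  induction l as [|[y|] l IH]; cbn; [tauto| |].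
  - rewrite IH. split; intros [H|H]; auto; left; congruence.
  - rewrite IH. split; auto. intros [H|H]; [discriminate | exact H].
Qed.

Lemma testbit_sum_pow2 l y : NoDup l ->
  Nat.testbit (fold_right (fun x acc => 2 ^ x + acc) 0 l) y = true <-> In y l.
Proof.
  intros Hnd. revert y. induction Hnd as [|x l Hx _ IH]; intros y; cbn [fold_right In].
  { rewrite Nat.bits_0. split; [discriminate | tauto]. }
  set (t := fold_right _ 0 l) in *.
  assert (Hdisj : Nat.land (2 ^ x) t = 0).
  { apply Nat.bits_inj_0. intros m. rewrite Nat.land_spec, Nat.pow2_bits_eqb.
    destruct (Nat.eqb_spec x m) as [<-|]; [|reflexivity].
    destruct (Nat.testbit t x) eqn:E; [apply IH in E; contradiction | reflexivity]. }
  rewrite Nat.add_nocarry_lxor, Nat.lxor_spec, Nat.pow2_bits_eqb by exact Hdisj.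
  destruct (Nat.eqb_spec x y) as [<-|Hne].
  - destruct (Nat.testbit t x) eqn:E; [apply IH in E; contradiction|]. cbn. tauto.
  - cbn. rewrite IH. intuition.
Qed.

Lemma testbit_canon_index T n x :
  Nat.testbit (canon_index (prefix T n)) x = true <-> content_upto T n x.
Proof.
  unfold canon_index. rewrite testbit_sum_pow2 by apply NoDup_nodup.
  rewrite nodup_In, In_somes. apply In_prefix.
Qed.

Lemma canon_index_prefix_ext T n m :
  (forall x, content_upto T n x <-> content_upto T m x) ->
  canon_index (prefix T n) = canon_index (prefix T m).
Proof.
  intros H. apply Nat.bits_inj. intros x. apply eq_true_iff_eq.
  rewrite !testbit_canon_index. apply H.
Qed.

Lemma content_upto_content T n x : content_upto T n x -> content T x.
Proof. intros [j [_ E]]. exists j. exact E. Qed.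

Lemma content_upto_mono T n m x : n <= m -> content_upto T n x -> content_upto T m x.
Proof. intros Hnm [j [Hj E]]. exists j. split; [lia | exact E]. Qed.

Lemma content_upto_covers T (s : list nat) : (forall x, In x s -> content T x) ->
  exists n, forall x, In x s -> content_upto T n x.
Proof.
  induction s as [|a s IH]; intros Hs; [exists 0; intros x []|].
  destruct IH as [n Hn]; [intros x Hx; apply Hs; now right|].
  destruct (Hs a (or_introl eq_refl)) as [j Hj].
  exists (S (max n j)). intros x [<-|Hx].
  - exists j. split; [lia | exact Hj].
  - eapply content_upto_mono, Hn, Hx. lia.
Qed.

Lemma content_upto_eventually_full T L : set_eq (content T) L -> finite_lang L ->
  exists n0, forall n, n0 <= n -> forall x, content_upto T n x <-> content T x.
Proof.
  intros HT [s Hs]. destruct (content_upto_covers T s) as [n0 Hn0].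
  { intros x Hx. apply HT, Hs, Hx. }
  exists n0. intros n Hn x. split; [apply content_upto_content|].
  intros Hx. eapply content_upto_mono, Hn0, Hs, HT, Hx. exact Hn.
Qed.

Lemma caut_of_content_upto psi (p : nat -> nat) T :
  (forall n x, W psi (p n) x <-> content_upto T n x) -> CautTar psi p T.
Proof.
  intros H n [_ Hnot]. apply Hnot. intros x Hx.
  apply (content_upto_content T n), H, Hx.
Qed.

(** * Finite classes are learnable *)

Lemma W_search_bit psi (s : nat -> nat) (Hs : forall e x y, phi e x y <-> psi (s e) x y) T n x :
  W psi (s (encode (search cbit (canon_index (prefix T n))))) x <-> content_upto T n x.
Proof.
  rewrite W_translate by exact Hs.
  rewrite (search_domain _ _ _ (fun _ => iszero ((canon_index (prefix T n) / 2 ^ x) mod 2)))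
    by (intros; apply eval_bit).
  rewrite <- testbit_canon_index, <- bit_spec.
  split; [intros [_ H]; exact H | intros H; exists 0; exact H].
Qed.

Lemma W_search_entry psi (s : nat -> nat) (Hs : forall e x y, phi e x y <-> psi (s e) x y) T n x :
  W psi (s (encode (search centry (code_seq (prefix T n))))) x <-> content_upto T n x.
Proof.
  rewrite W_translate by exact Hs.
  rewrite search_domain by (intros; apply eval_entry).
  rewrite <- In_prefix. split.
  - intros [i Hi]. apply entry_spec in Hi. eapply nth_error_In, Hi.
  - intros Hx. apply In_nth_error in Hx as [i Hi]. exists i. apply entry_spec, Hi.
Qed.

Lemma finite_learnable_Sd_Ex psi (Hpsi : acceptable psi) (Lcal : (nat -> Prop) -> Prop) :
  (forall L, Lcal L -> finite_lang L) -> learnable (CautTar psi) Sd_op (Ex_crit psi) Lcal.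
Proof.
  intros Hfin. destruct Hpsi as [_ [s [[sc Hsc] Hs]]].
  set (p T i := s (encode (search cbit (canon_index (prefix T i))))).
  assert (Hbeta : forall T, Sd_op (learner sc cbit) T (p T))
    by (intros T i; exact (eval_learner sc s _ _ Hsc)).
  assert (HW : forall T n x, W psi (p T n) x <-> content_upto T n x)
    by (intros T n x; exact (W_search_bit psi s Hs T n x)).
  exists (learner sc cbit). intros L HL. split.
  - intros T. exists (p T). split; [apply Hbeta | apply caut_of_content_upto, HW].
  - intros T HT. exists (p T). split; [apply Hbeta|].
    destruct (content_upto_eventually_full T L HT (Hfin L HL)) as [n0 Hn0].
    exists n0. intros n Hn. split.
    + unfold p. rewrite (canon_index_prefix_ext T n n0); [reflexivity|].
      intros x. rewrite (Hn0 n Hn), (Hn0 n0 (le_n n0)). reflexivity.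
    + intros x. rewrite HW. apply Hn0, le_n.
Qed.

Lemma finite_learnable_G_Bc psi (Hpsi : acceptable psi) (Lcal : (nat -> Prop) -> Prop) :
  (forall L, Lcal L -> finite_lang L) -> learnable (CautTar psi) G_op (Bc_crit psi) Lcal.
Proof.
  intros Hfin. destruct Hpsi as [_ [s [[sc Hsc] Hs]]].
  set (p T i := s (encode (search centry (code_seq (prefix T i))))).
  assert (Hbeta : forall T, G_op (learner sc centry) T (p T))
    by (intros T i; exact (eval_learner sc s _ _ Hsc)).
  assert (HW : forall T n x, W psi (p T n) x <-> content_upto T n x)
    by (intros T n x; exact (W_search_entry psi s Hs T n x)).
  exists (learner sc centry). intros L HL. split.
  - intros T. exists (p T). split; [apply Hbeta | apply caut_of_content_upto, HW].
  - intros T HT. exists (p T). split; [apply Hbeta|].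
    destruct (content_upto_eventually_full T L HT (Hfin L HL)) as [n0 Hn0].
    exists n0. intros n Hn x. rewrite HW. apply Hn0, Hn.
Qed.

(** * Cautiously learnable classes are finite *)

Definition prefix_determined (beta : interaction) : Prop :=
  forall h T T' p p' n, prefix T n = prefix T' n -> beta h T p -> beta h T' p' -> p n = p' n.

Lemma Sd_prefix_determined : prefix_determined Sd_op.
Proof.
  intros h T T' p p' n E Hp Hp'. apply (eval_functional _ _ _ (Hp n)). rewrite E. apply Hp'.
Qed.

Lemma G_prefix_determined : prefix_determined G_op.
Proof.
  intros h T T' p p' n E Hp Hp'. apply (eval_functional _ _ _ (Hp n)). rewrite E. apply Hp'.
Qed.

Definition truncate (T : text) (n : nat) : text := fun j => if j <? n then T j else None.

Lemma prefix_truncate T n : prefix (truncate T n) n = prefix T n.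
Proof.
  apply map_ext_in. intros j Hj. apply in_seq in Hj. unfold truncate.
  destruct (Nat.ltb_spec j n); [reflexivity | lia].
Qed.

Lemma content_truncate T n x : content (truncate T n) x <-> content_upto T n x.
Proof.
  unfold content, content_upto, truncate. split.
  - intros [j E]. destruct (Nat.ltb_spec j n); [eauto | discriminate].
  - intros [j [Hj E]]. exists j. destruct (Nat.ltb_spec j n); [exact E | lia].
Qed.

Lemma finite_content_upto T n : finite_lang (content_upto T n).
Proof. exists (somes (prefix T n)). intros x. rewrite In_somes, In_prefix. reflexivity. Qed.

Lemma text_exists (L : nat -> Prop) : exists T : text, set_eq (content T) L.
Proof.
  exists (fun n => if excluded_middle_informative (L n) then Some n else None).
  intros x. unfold content. split.
  - intros [n E]. destruct (excluded_middle_informative (L n)); congruence.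
  - intros Hx. exists x. destruct (excluded_middle_informative (L x)); tauto.
Qed.

Lemma caut_learnable_finite psi beta delta (Lcal : (nat -> Prop) -> Prop) :
  prefix_determined beta ->
  (forall p T, delta p T -> exists n, set_eq (W psi (p n)) (content T)) ->
  learnable (CautTar psi) beta delta Lcal -> forall L, Lcal L -> finite_lang L.
Proof.
  intros Hdet Hdelta [h Hh] L HL. destruct (Hh L HL) as [Hcaut Hlearn].
  destruct (text_exists L) as [T HT].
  destruct (Hlearn T HT) as [p [Hp Hd]]. destruct (Hdelta p T Hd) as [n Hn].
  destruct (Hcaut (truncate T n)) as [p' [Hp' Hcaut']].
  assert (Ep : p' n = p n) by exact (Hdet h _ _ _ _ n (prefix_truncate T n) Hp' Hp).
  assert (Hsub : subset (W psi (p n)) (content (truncate T n))).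
  { apply NNPP. intros Hnot. apply (Hcaut' n). rewrite Ep. split; [|exact Hnot].
    intros x Hx. apply Hn. eapply content_upto_content, content_truncate, Hx. }
  destruct (finite_content_upto T n) as [s Hs]. exists s. intros x. rewrite <- Hs. split.
  - intros Hx. apply content_truncate, Hsub, Hn, HT, Hx.
  - intros Hx. apply HT. eapply content_upto_content, Hx.
Qed.

Theorem theorem3 (psi : nat -> nat -> nat -> Prop) (Hpsi : acceptable psi)
  (Lcal : (nat -> Prop) -> Prop) :
  ((forall L, Lcal L -> finite_lang L) <->
     learnable (CautTar psi) Sd_op (Ex_crit psi) Lcal) /\
  ((forall L, Lcal L -> finite_lang L) <->
     learnable (CautTar psi) G_op (Bc_crit psi) Lcal).
Proof.
  split; split.
  - apply finite_learnable_Sd_Ex, Hpsi.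
  - apply caut_learnable_finite; [exact Sd_prefix_determined|].
    intros p T [n Hn]. exists n. apply (Hn n), le_n.
  - apply finite_learnable_G_Bc, Hpsi.
  - apply caut_learnable_finite; [exact G_prefix_determined|].
    intros p T [n Hn]. exists n. apply (Hn n), le_n.
Qed.
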